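(* Let $|\psi\rangle\in(\mathbb{C}^2)^{\otimes5}$ be the 5-qubit ring graph state, i.e. the (up to phase) unique state with $A_i|\psi\rangle=|\psi\rangle$ for $i=1,\dots,5$, where $A_i=Z_{i-1}X_iZ_{i+1}$ with indices taken cyclically ($Z_0=Z_5$, $Z_6=Z_1$). Fix $a\in(0,1/2)$ and let $h=h_1\otimes\cdots\otimes h_5$ with $h_1=h_3=(\tfrac12\mathbb{1}+aZ)^{1/2}$, $h_2=(\tfrac12\mathbb{1}+aX)^{1/2}$, $h_4=h_5=(\tfrac12\mathbb{1})^{1/2}$ (positive square roots), so that $h^\dagger h=(\tfrac12\mathbb{1}+aZ)\otimes(\tfrac12\mathbb{1}+aX)\otimes(\tfrac12\mathbb{1}+aZ)\otimes\tfrac12\mathbb{1}\otimes\tfrac12\mathbb{1}$. Then $|\psi\rangle$ can be transformed into the normalized state $h|\psi\rangle/\|h|\psi\rangle\|$ by a SEP map, but not by any $\mathrm{SEP}_1$ map.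
   Context: $X,Z$ are the Pauli matrices and $X_i,Z_i$ denote them acting on qubit $i$ (identity elsewhere). A CPTP map on $\mathcal{B}((\mathbb{C}^2)^{\otimes5})$ is in SEP if it admits a Kraus decomposition $\Lambda(\rho)=\sum_iK_i\rho K_i^\dagger$, $\sum_iK_i^\dagger K_i=\mathbb{1}$, with all Kraus operators of product form $K_i=\bigotimes_{j=1}^5K_i^{(j)}$, $K_i^{(j)}\in M(2,\mathbb{C})$; it is in $\mathrm{SEP}_1$ if such a decomposition exists with all $K_i^{(j)}\in GL(2,\mathbb{C})$. A transformation of $|\alpha\rangle$ into $|\beta\rangle$ means $\Lambda(|\alpha\rangle\langle\alpha|)=|\beta\rangle\langle\beta|$. *)

From HB Require Import structures.
From mathcomp Require Import all_boot all_order all_algebra.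
From mathcomp Require Import complex mxtens reals.
Set Implicit Arguments. Unset Strict Implicit. Unset Printing Implicit Defensive.
Import Order.TTheory GRing.Theory Num.Theory.
Local Open Scope ring_scope.

Section QuantumDefs.
Context {C : numClosedFieldType}.

Definition adjm {m n} (A : 'M[C]_(m, n)) : 'M[C]_(n, m) := (map_mx Num.conj A)^T.

Definition PauliX : 'M[C]_2 := \matrix_(i < 2, j < 2) (i != j)%:R.
Definition PauliZ : 'M[C]_2 :=
  \matrix_(i < 2, j < 2) (if i == j then (if i == 0 :> 'I_2 then 1 else -1) else 0).

(* Hilbert space dimension of 5 qubits (= 32), as produced by the Kronecker product *)
Definition N5 := (2 * (2 * (2 * (2 * 2))))%N.

(* Kronecker product K^(0) ⊗ ... ⊗ K^(4) of five one-qubit operators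
   (qubits are numbered 0..4 here, 1..5 in the paper) *)
Definition kron5 (F : 'I_5 -> 'M[C]_2) : 'M[C]_N5 :=
  F 0 *t (F 1 *t (F 2 *t (F 3 *t F 4))).

Definition on_qubit (i : 'I_5) (P : 'M[C]_2) : 'M[C]_N5 :=
  kron5 (fun j => if j == i then P else 1%:M).

Definition ring_stab (i : 'I_5) : 'M[C]_N5 :=
  on_qubit (i - 1) PauliZ *m on_qubit i PauliX *m on_qubit (i + 1) PauliZ.

Definition proj {n} (v : 'cV[C]_n) : 'M[C]_n := v *m adjm v.

Definition vnorm {n} (v : 'cV[C]_n) : C := sqrtC ((adjm v *m v) 0 0).

Definition psd2 (A : 'M[C]_2) : Prop :=
  adjm A = A /\ forall v : 'cV[C]_2, 0 <= (adjm v *m A *m v) 0 0.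

Definition kraus_apply {n} (K : 'I_n -> 'I_5 -> 'M[C]_2) (rho : 'M[C]_N5) : 'M[C]_N5 :=
  \sum_(i < n) kron5 (K i) *m rho *m adjm (kron5 (K i)).

Definition kraus_TP {n} (K : 'I_n -> 'I_5 -> 'M[C]_2) : Prop :=
  \sum_(i < n) adjm (kron5 (K i)) *m kron5 (K i) = 1%:M.

Definition SEP_transforms (alpha beta : 'cV[C]_N5) : Prop :=
  exists n (K : 'I_n -> 'I_5 -> 'M[C]_2),
    kraus_TP K /\ kraus_apply K (proj alpha) = proj beta.

Definition SEP1_transforms (alpha beta : 'cV[C]_N5) : Prop :=
  exists n (K : 'I_n -> 'I_5 -> 'M[C]_2),
    (forall i j, K i j \in unitmx) /\
    kraus_TP K /\ kraus_apply K (proj alpha) = proj beta.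

End QuantumDefs.

From HB Require Import structures.
From mathcomp Require Import all_boot all_order all_algebra.
From mathcomp Require Import complex mxtens reals.
From mathcomp Require Import ring.
Set Implicit Arguments. Unset Strict Implicit. Unset Printing Implicit Defensive.
Import Order.TTheory GRing.Theory Num.Theory.
Local Open Scope ring_scope.

(* Qubits are numbered 0..4 as in kron5, so A_k = Z_(k-1) X_k Z_(k+1).

   SEP: the stabilizer elements S = 1, A_0, A_2, A_0 A_2 are product operators fixing psi,
   so the Kraus operators b h S send psi to b h psi.  Conjugation by these S flips the signs
   of Z_0, X_1, Z_2 along the four even sign patterns, so averaging
   h^* h = (1 + 2a Z_0)(1 + 2a X_1)(1 + 2a Z_2) / 32 over them leaves (1 + 8 a^3 A_1) / 32.
   The product projector P onto the joint -1 eigenspace of Z_0, X_1, Z_2 satisfies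
   P A_1 = - P, so the operators g P S annihilate psi; P averages to (1 - A_1) / 8, and
   suitable weights b, g make the family trace preserving.

   Not SEP_1: if every local factor of a Kraus operator K is invertible, K psi ~ h psi makes
   g = h^-1 K an invertible local symmetry of psi.  On qubit j, the projector 1 + s sigma_j
   acting on psi can be moved, through the stabilizers, off the support of a stabilizer T
   whose factor at j is sigma_j; hence g (1 + s sigma_j) psi is still fixed by T, and g_j
   maps every eigenvector of X and of Z to an eigenvector: each g_j is a scaled Pauli
   matrix.  Consequently tr (K^* K A_1) > 0 for every Kraus operator, whereas trace
   preservation forces the sum of these traces to be tr A_1 = 0. *)

Lemma ord2P (i : 'I_2) : i = 0 \/ i = 1.
Proof. by case: i => [[|[|//]] ?]; [left|right]; apply/val_inj. Qed.

Lemma ord5P (j : 'I_5) : j = 0 \/ j = 1 \/ j = 2 \/ j = 3 \/ j = 4.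
Proof.
by case: j => [[|[|[|[|[|//]]]]] ?];
  [left|right; left|do 2 right; left|do 3 right; left|do 4 right]; apply/val_inj.
Qed.

Ltac ord5_cases l := case: (ord5P l) => [->|[->|[->|[->|->]]]].

Lemma big_ord2 (R : Type) (idx : R) (op : Monoid.law idx) (F : 'I_2 -> R) :
  \big[op/idx]_(j < 2) F j = op (F 0) (F 1).
Proof. by rewrite !big_ord_recl big_ord0 Monoid.mulm1; congr (op _ (F _)); apply: val_inj. Qed.

Lemma big_ord5 (R : Type) (idx : R) (op : Monoid.law idx) (F : 'I_5 -> R) :
  \big[op/idx]_(j < 5) F j = op (F 0) (op (F 1) (op (F 2) (op (F 3) (F 4)))).
Proof.
rewrite !big_ord_recl big_ord0 Monoid.mulm1.
by congr (op (F _) (op (F _) (op (F _) (op (F _) (F _))))); apply: val_inj.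
Qed.

Section TwoByTwo.
Variable C : numClosedFieldType.
Local Notation M2 := 'M[C]_2.

Definition m22 (a b c d : C) : M2 :=
  \matrix_(i < 2, j < 2) if i == 0 then (if j == 0 then a else b)
                         else (if j == 0 then c else d).

Lemma matrix2P (A B : M2) :
  A 0 0 = B 0 0 -> A 0 1 = B 0 1 -> A 1 0 = B 1 0 -> A 1 1 = B 1 1 -> A = B.
Proof.
move=> e00 e01 e10 e11; apply/matrixP => i j.
by case: (ord2P i) => ->; case: (ord2P j) => ->.
Qed.

Lemma m22_eta (A : M2) : A = m22 (A 0 0) (A 0 1) (A 1 0) (A 1 1).
Proof. by apply: matrix2P; rewrite mxE. Qed.

Lemma m22_congr a b c d a' b' c' d' :
  a = a' -> b = b' -> c = c' -> d = d' -> m22 a b c d = m22 a' b' c' d'.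
Proof. by move=> -> -> -> ->. Qed.

Lemma mulmx_m22 a b c d a' b' c' d' :
  m22 a b c d *m m22 a' b' c' d' =
  m22 (a * a' + b * c') (a * b' + b * d') (c * a' + d * c') (c * b' + d * d').
Proof. by apply: matrix2P; rewrite !mxE !big_ord_recr big_ord0 /= !mxE add0r. Qed.

Lemma addmx_m22 a b c d a' b' c' d' :
  m22 a b c d + m22 a' b' c' d' = m22 (a + a') (b + b') (c + c') (d + d').
Proof. by apply: matrix2P; rewrite !mxE. Qed.

Lemma scalemx_m22 k a b c d : k *: m22 a b c d = m22 (k * a) (k * b) (k * c) (k * d).
Proof. by apply: matrix2P; rewrite !mxE. Qed.

Lemma oppmx_m22 a b c d : - m22 a b c d = m22 (- a) (- b) (- c) (- d).
Proof. by apply: matrix2P; rewrite !mxE. Qed.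

Lemma scalar_mx_m22 k : k%:M = m22 k 0 0 k.
Proof. by apply: matrix2P; rewrite !mxE. Qed.

Lemma PauliX_m22 : PauliX = m22 0 1 1 0.
Proof. by apply: matrix2P; rewrite !mxE. Qed.

Lemma PauliZ_m22 : PauliZ = m22 1 0 0 (-1).
Proof. by apply: matrix2P; rewrite !mxE. Qed.

Lemma adjm_m22 a b c d : adjm (m22 a b c d) = m22 a^* c^* b^* d^*.
Proof. by apply: matrix2P; rewrite !mxE. Qed.

Lemma mxtrace_m22 a b c d : \tr (m22 a b c d) = a + d.
Proof. by rewrite /mxtrace !big_ord_recr big_ord0 /= add0r !mxE. Qed.

Lemma det_m22 a b c d : \det (m22 a b c d) = a * d - b * c.
Proof.
rewrite (expand_det_row _ 0) big_ord2 /cofactor !det_mx11 !mxE /=.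
by have -> : (0 + 1 %% 2 = 1)%N by []; rewrite expr0 expr1; ring.
Qed.

End TwoByTwo.

Ltac m22_normalize :=
  rewrite ?PauliX_m22 ?PauliZ_m22 ?scalar_mx_m22;
  rewrite ?(adjm_m22, mulmx_m22, addmx_m22, scalemx_m22, oppmx_m22,
            rmorph0, rmorph1, rmorphN, rmorphN1, rmorphM).
Ltac m22_ring := m22_normalize; apply: m22_congr; ring.
Ltac m22_field := m22_normalize; apply: m22_congr; field.

Section Tensor.
Variable C : numClosedFieldType.

Lemma adjm_mul m n p (A : 'M[C]_(m, n)) (B : 'M[C]_(n, p)) :
  adjm (A *m B) = adjm B *m adjm A.
Proof. by rewrite /adjm map_mxM trmx_mul. Qed.

Lemma adjmZ m n k (A : 'M[C]_(m, n)) : adjm (k *: A) = k^* *: adjm A.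
Proof. by apply/matrixP => i j; rewrite !mxE rmorphM. Qed.

Lemma adjm_tens m n p q (A : 'M[C]_(m, n)) (B : 'M[C]_(p, q)) :
  adjm (A *t B) = adjm A *t adjm B.
Proof. by rewrite /adjm map_mxT trmx_tens. Qed.

Lemma tensmxDl m n p q (A B : 'M[C]_(m, n)) (D : 'M[C]_(p, q)) :
  (A + B) *t D = A *t D + B *t D.
Proof. by apply/matrixP => i j; rewrite !mxE mulrDl. Qed.

Lemma tensmxDr m n p q (A : 'M[C]_(m, n)) (B D : 'M[C]_(p, q)) :
  A *t (B + D) = A *t B + A *t D.
Proof. by apply/matrixP => i j; rewrite !mxE mulrDr. Qed.

Lemma tensmxZl m n p q k (A : 'M[C]_(m, n)) (D : 'M[C]_(p, q)) :
  (k *: A) *t D = k *: (A *t D).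
Proof. by apply/matrixP => i j; rewrite !mxE mulrA. Qed.

Lemma tensmxZr m n p q k (A : 'M[C]_(m, n)) (D : 'M[C]_(p, q)) :
  A *t (k *: D) = k *: (A *t D).
Proof. by apply/matrixP => i j; rewrite !mxE mulrCA. Qed.

Lemma tensmx11 m n : (1%:M : 'M[C]_m) *t (1%:M : 'M[C]_n) = 1%:M.
Proof.
apply/matrixP => i j.
case: (mxtens_indexP i) => i0 i1; case: (mxtens_indexP j) => j0 j1.
rewrite tensmxE !mxE (inj_eq (can_inj (@mxtens_indexK m n))) xpair_eqE.
by case: (i0 == j0); case: (i1 == j1); rewrite ?mulr1 ?mulr0.
Qed.

Lemma mxtrace_tens m n (A : 'M[C]_m) (B : 'M[C]_n) : \tr (A *t B) = \tr A * \tr B.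
Proof. by rewrite /mxtrace mulr_sum; apply: eq_bigr => k _; rewrite mxE. Qed.

End Tensor.

Section Kron5.
Variable C : numClosedFieldType.
Local Notation M2 := 'M[C]_2.
Local Notation M32 := 'M[C]_N5.
Implicit Types (F G : 'I_5 -> M2) (j : 'I_5).

Definition tens5 (a b c d e : M2) : M32 := a *t (b *t (c *t (d *t e))).

Lemma kron5E F : kron5 F = tens5 (F 0) (F 1) (F 2) (F 3) (F 4).
Proof. by []. Qed.

Lemma eq_kron5 F G : (forall j, F j = G j) -> kron5 F = kron5 G.
Proof. by move=> e; rewrite !kron5E !e. Qed.

Lemma kron5_mul F G : kron5 F *m kron5 G = kron5 (fun j => F j *m G j).
Proof. by rewrite /kron5 !tensmx_mul. Qed.

Lemma adjm_kron5 F : adjm (kron5 F) = kron5 (fun j => adjm (F j)).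
Proof. by rewrite /kron5 !adjm_tens. Qed.

Lemma kron5_const1 : kron5 (fun=> 1%:M : M2) = 1%:M.
Proof. by rewrite /kron5 !tensmx11. Qed.

Lemma mxtrace_kron5 F : \tr (kron5 F) = \prod_(j < 5) \tr (F j).
Proof. by rewrite /kron5 !mxtrace_tens big_ord5. Qed.

Lemma kron5Z (k : 'I_5 -> C) F :
  kron5 (fun j => k j *: F j) = (\prod_(j < 5) k j) *: kron5 F.
Proof. by rewrite /kron5 !(tensmxZl, tensmxZr) !scalerA big_ord5 /= !mulrA. Qed.

Lemma kron5_anticomm F G j :
  F j *m G j = - (G j *m F j) -> (forall l, l != j -> F l *m G l = G l *m F l) ->
  kron5 F *m kron5 G = - (kron5 G *m kron5 F).
Proof.
move=> anti comm; rewrite !kron5_mul.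
pose sgn l : C := if l == j then -1 else 1.
have -> : kron5 (fun l => F l *m G l) = kron5 (fun l => sgn l *: (G l *m F l)).
  apply: eq_kron5 => l; rewrite /sgn; case: eqP => [->|/eqP ne]; first by rewrite anti scaleN1r.
  by rewrite scale1r comm.
rewrite kron5Z (bigD1 j) //= big1 => [|l /negbTE ne]; last by rewrite /sgn ne.
by rewrite /sgn eqxx mulr1 scaleN1r.
Qed.

Lemma kron5_unit F : (forall j, F j \in unitmx) ->
  kron5 (fun j => invmx (F j)) *m kron5 F = 1%:M.
Proof.
by move=> U; rewrite kron5_mul -kron5_const1; apply: eq_kron5 => j; rewrite mulVmx.
Qed.

Definition upd5 F j (A : M2) : 'I_5 -> M2 := fun l => if l == j then A else F l.

Lemma on_qubit_upd5 F j (A B : M2) :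
  on_qubit j A *m kron5 (upd5 F j B) = kron5 (upd5 F j (A *m B)).
Proof. by rewrite kron5_mul; apply: eq_kron5 => l; rewrite /upd5; case: eqP; rewrite ?mul1mx. Qed.

Lemma on_qubitD j (A B : M2) : on_qubit j (A + B) = on_qubit j A + on_qubit j B.
Proof. by ord5_cases j; rewrite /on_qubit !kron5E /= /tens5 !(tensmxDl, tensmxDr). Qed.

Lemma on_qubitZ j k (A : M2) : on_qubit j (k *: A) = k *: on_qubit j A.
Proof. by ord5_cases j; rewrite /on_qubit !kron5E /= /tens5 !(tensmxZl, tensmxZr). Qed.

Lemma on_qubit1 j : on_qubit j (1%:M : M2) = 1%:M.
Proof. by rewrite -kron5_const1; apply: eq_kron5 => l; rewrite if_same. Qed.

Lemma kron5_upd5Z F j k A : kron5 (upd5 F j (k *: A)) = k *: kron5 (upd5 F j A).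
Proof.
have -> : k *: A = (k *: 1%:M) *m A by rewrite -scalemxAl mul1mx.
by rewrite -on_qubit_upd5 on_qubitZ -scalemxAl on_qubit_upd5 mul1mx.
Qed.

Definition scale5 (b : C) F : 'I_5 -> M2 := upd5 F 0 (b *: F 0).

Lemma kron5_scale5 b F : kron5 (scale5 b F) = b *: kron5 F.
Proof. by rewrite /scale5 kron5_upd5Z. Qed.

Definition string5 (A0 A1 A2 A3 A4 : M2) : 'I_5 -> M2 :=
  fun l => nth 1%:M [:: A0; A1; A2; A3; A4] l.

End Kron5.

Ltac tens5_eq :=
  rewrite /tens5 ?adjm_tens ?tensmx_mul ?(tensmxZl, tensmxZr) -?tensmxZl;
  congr (_ *t (_ *t (_ *t (_ *t _)))); m22_ring.
Ltac ring5_eq := rewrite /ring_stab /on_qubit !kron5E /=; tens5_eq.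

Section Dot.
Variables (C : numClosedFieldType) (n : nat).
Implicit Types u v w : 'cV[C]_n.

Definition dotc u v : C := (adjm u *m v) 0 0.

Lemma dotcE u v : dotc u v = \sum_k (u k 0)^* * v k 0.
Proof. by rewrite /dotc mxE; apply: eq_bigr => k _; rewrite !mxE. Qed.

Lemma conj_dotc u v : (dotc u v)^* = dotc v u.
Proof. by rewrite !dotcE rmorph_sum; apply: eq_bigr => k _; rewrite rmorphM /= conjCK mulrC. Qed.

Lemma dotcD u v w : dotc u (v + w) = dotc u v + dotc u w.
Proof. by rewrite /dotc mulmxDr mxE. Qed.

Lemma dotcB u v w : dotc u (v - w) = dotc u v - dotc u w.
Proof. by rewrite /dotc mulmxBr !mxE. Qed.

Lemma dotcZ u k v : dotc u (k *: v) = k * dotc u v.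
Proof. by rewrite /dotc -scalemxAr mxE. Qed.

Lemma dotcZl k u v : dotc (k *: u) v = k^* * dotc u v.
Proof. by rewrite -conj_dotc dotcZ rmorphM /= conj_dotc. Qed.

Lemma dotc_ge0 v : 0 <= dotc v v.
Proof. by rewrite dotcE; apply: sumr_ge0 => k _; rewrite mulrC mul_conjC_ge0. Qed.

Lemma dotc_eq0 v : (dotc v v == 0) = (v == 0).
Proof.
apply/eqP/eqP => [|->]; last by rewrite /dotc mulmx0 mxE.
rewrite dotcE => /eqP; rewrite psumr_eq0 => [/allP v0|k _]; last by rewrite mulrC mul_conjC_ge0.
apply/matrixP => k l; rewrite [l]ord1 mxE.
by apply/eqP; rewrite -mul_conjC_eq0 mulrC; apply/eqP/eqP/v0; rewrite mem_index_enum.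
Qed.

Lemma dotc_proj u w : (adjm u *m proj w *m u) 0 0 = dotc u w * (dotc u w)^*.
Proof. by rewrite /proj mulmxA -mulmxA mxE big_ord1 conj_dotc. Qed.

Lemma mxtrace_proj v : \tr (proj v) = dotc v v.
Proof. by rewrite /proj mxtrace_mulC /mxtrace big_ord1. Qed.

Lemma proj_mul (A : 'M[C]_n) v : A *m proj v *m adjm A = proj (A *m v).
Proof. by rewrite /proj adjm_mul !mulmxA. Qed.

Lemma projZ k v : proj (k *: v) = (k * k^*) *: proj v.
Proof. by rewrite /proj adjmZ -scalemxAl -scalemxAr scalerA. Qed.

Lemma normalize_scale v : (vnorm v)^-1 * ((vnorm v)^-1)^* = (dotc v v)^-1.
Proof.
rewrite geC0_conj ?invr_ge0 ?sqrtC_ge0 ?dotc_ge0 // -invfM -expr2.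
by rewrite /vnorm -/(dotc v v) sqrtCK.
Qed.

Lemma proj_normalize v : proj ((vnorm v)^-1 *: v) = (dotc v v)^-1 *: proj v.
Proof. by rewrite projZ normalize_scale. Qed.

Lemma dotc_normalize v : v != 0 -> dotc ((vnorm v)^-1 *: v) ((vnorm v)^-1 *: v) = 1.
Proof.
by rewrite -dotc_eq0 => v0; rewrite dotcZl dotcZ mulrA [_^* * _]mulrC normalize_scale mulVf.
Qed.

Lemma sum_proj_eq_proj m (w : 'I_m -> 'cV[C]_n) b :
  \sum_i proj (w i) = proj b -> dotc b b = 1 -> forall i, w i = dotc b (w i) *: b.
Proof.
move=> sum_wb b_unit i; set u := w i - dotc b (w i) *: b.
have ub : dotc u b = 0 by rewrite -conj_dotc /u dotcB dotcZ b_unit mulr1 subrr rmorph0.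
have uw0 k : dotc u (w k) = 0.
  have := congr1 (fun M => (adjm u *m M *m u) 0 0) sum_wb.
  rewrite /= dotc_proj ub mul0r mulmx_sumr mulmx_suml summxE => /eqP.
  rewrite psumr_eq0 => [/allP/(_ k (mem_index_enum _))|l _]; rewrite dotc_proj ?mul_conjC_ge0 //.
  by rewrite mul_conjC_eq0 => /eqP.
apply/eqP; rewrite -subr_eq0 -/u -dotc_eq0.
by rewrite {2}/u dotcB dotcZ ub uw0 mulr0 subrr.
Qed.

Lemma expect_anticomm (psi : 'cV[C]_n) (Q S : 'M[C]_n) :
  S *m psi = psi -> adjm S = S -> Q *m S = - (S *m Q) -> (adjm psi *m Q *m psi) 0 0 = 0.
Proof.
move=> Spsi Sherm anti.
have Spsi' : adjm psi *m S = adjm psi by rewrite -Sherm -adjm_mul Spsi.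
have : (adjm psi *m Q *m psi) 0 0 = - (adjm psi *m Q *m psi) 0 0.
  by rewrite -{2}Spsi mulmxA -(mulmxA _ Q) anti mulmxN mulNmx mulmxA Spsi' mxE.
by move/eqP; rewrite -addr_eq0 -mulr2n mulrn_eq0 => /eqP.
Qed.

End Dot.

Lemma mul_conj_sqrtC (C : numClosedFieldType) (x : C) : 0 <= x -> (sqrtC x)^* * sqrtC x = x.
Proof. by move=> x0; rewrite geC0_conj ?sqrtC_ge0 // -expr2 sqrtCK. Qed.

Section RingStabilizers.
Variable C : numClosedFieldType.
Local Notation M2 := 'M[C]_2.
Local Notation X := (PauliX : M2).
Local Notation Z := (PauliZ : M2).

Lemma PauliX2 : X *m X = 1%:M. Proof. by m22_ring. Qed.
Lemma PauliZ2 : Z *m Z = 1%:M. Proof. by m22_ring. Qed.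
Lemma mxtrace_PauliX : \tr X = 0. Proof. by rewrite PauliX_m22 mxtrace_m22 addr0. Qed.
Lemma mxtrace_PauliZ : \tr Z = 0. Proof. by rewrite PauliZ_m22 mxtrace_m22 subrr. Qed.
Lemma adjm_PauliX : adjm X = X. Proof. by m22_ring. Qed.
Lemma adjm_PauliZ : adjm Z = Z. Proof. by m22_ring. Qed.
Lemma adjm1 : adjm (1%:M : M2) = 1%:M. Proof. by m22_ring. Qed.

Definition stab_string (k : 'I_5) : 'I_5 -> M2 := fun l =>
  if l == k then X else if (l == k - 1) || (l == k + 1) then Z else 1%:M.

(* The strings of Z_l A_(l-1) and of X_l A_l A_(l+2) A_(l+3): they act on the ring state
   like Z_l and X_l, and avoid the supports of A_(l+1) and A_l respectively. *)
Definition z_transfer (l : 'I_5) : 'I_5 -> M2 := fun m =>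
  if m == l - 2 then Z else if m == l - 1 then X else 1%:M.

Definition x_transfer (l : 'I_5) : 'I_5 -> M2 := fun m =>
  if m == l + 2 then X *m Z else if m == l + 3 then Z *m X else 1%:M.

Lemma stab_string_invol k l : stab_string k l *m stab_string k l = 1%:M.
Proof.
by rewrite /stab_string; case: ifP => _; [|case: ifP => _]; rewrite ?PauliX2 ?PauliZ2 ?mulmx1.
Qed.

Lemma stab_string_herm k l : adjm (stab_string k l) = stab_string k l.
Proof.
rewrite /stab_string; case: ifP => _; [|case: ifP => _];
  by rewrite ?adjm_PauliX ?adjm_PauliZ ?adjm1.
Qed.

Lemma stab_string_self l : stab_string l l = X.
Proof. by rewrite /stab_string eqxx. Qed.

Lemma stab_string_pred l : stab_string (l + 1) l = Z.
Proof. by ord5_cases l. Qed.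

Lemma ring_stabE k : ring_stab k = kron5 (stab_string k).
Proof. by ord5_cases k; rewrite /stab_string; ring5_eq. Qed.

Lemma ring_stab_herm k : adjm (ring_stab k : 'M[C]_N5) = ring_stab k.
Proof. by rewrite ring_stabE adjm_kron5; apply: eq_kron5 => l; rewrite stab_string_herm. Qed.

Lemma ring_Z_transfer l : on_qubit l Z *m ring_stab (l - 1) = kron5 (z_transfer l).
Proof. by ord5_cases l; rewrite /z_transfer; ring5_eq. Qed.

Lemma ring_X_transfer l :
  on_qubit l X *m ring_stab l *m ring_stab (l + 2) *m ring_stab (l + 3) = kron5 (x_transfer l).
Proof. by ord5_cases l; rewrite /x_transfer; ring5_eq. Qed.

Lemma ring_Z_disjoint l m : stab_string (l + 1) m = 1%:M \/ z_transfer l m = 1%:M.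
Proof. ord5_cases l; ord5_cases m; rewrite /stab_string /z_transfer /=; by [left | right]. Qed.

Lemma ring_X_disjoint l m : stab_string l m = 1%:M \/ x_transfer l m = 1%:M.
Proof. ord5_cases l; ord5_cases m; rewrite /stab_string /x_transfer /=; by [left | right]. Qed.

Lemma ring_Z_anticomm l : on_qubit l Z *m ring_stab l = - (ring_stab l *m on_qubit l Z).
Proof.
rewrite ring_stabE; apply: (kron5_anticomm (j := l)) => [|m /negbTE ne].
  by rewrite eqxx stab_string_self; m22_ring.
by rewrite ne mul1mx mulmx1.
Qed.

Lemma ring_X_anticomm l :
  on_qubit l X *m ring_stab (l + 1) = - (ring_stab (l + 1) *m on_qubit l X).
Proof.
rewrite ring_stabE; apply: (kron5_anticomm (j := l)) => [|m /negbTE ne].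
  by rewrite eqxx stab_string_pred; m22_ring.
by rewrite ne mul1mx mulmx1.
Qed.

End RingStabilizers.

Arguments stab_string {C} k l.
Arguments z_transfer {C} l m.
Arguments x_transfer {C} l m.

Section LocalSymmetry.
Variable C : numClosedFieldType.
Local Notation M2 := 'M[C]_2.

Definition collinear2 (x y : 'cV[C]_2) : Prop := x 0 0 * y 1 0 = x 1 0 * y 0 0.

Lemma kron5_fixed_rank1 (t y : 'I_5 -> M2) (w : 'cV[C]_N5) j (x : 'cV[C]_2) (v : 'rV[C]_2) :
  (forall l, t l *m t l = 1%:M) -> kron5 t *m (kron5 y *m w) = kron5 y *m w ->
  kron5 y *m w != 0 -> y j = x *m v -> collinear2 x (t j *m x).
Proof.
move=> t_invol fixed nz yx.
set d := x 0 0 * (t j *m x) 1 0 - x 1 0 * (t j *m x) 0 0.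
suff : d = 0 by move/eqP; rewrite subr_eq0 => /eqP.
(* Multiply the fixed-point equation by L (x) t, where L kills x but not t_j x: slot j
   becomes d e0 v on the left and 0 on the right. *)
pose e0 : 'cV[C]_2 := delta_mx 0 0.
pose r : 'rV[C]_2 := \row_i (if i == 0 then - x 1 0 else x 0 0).
have rx : r *m x = 0.
  by apply/matrixP => a b; rewrite [a]ord1 [b]ord1 !mxE big_ord2 !mxE /=; ring.
have rtx : r *m (t j *m x) = d%:M.
  by apply/matrixP => a b; rewrite [a]ord1 [b]ord1 /d !mxE big_ord2 !mxE /= mulr1n; ring.
pose L : M2 := e0 *m r.
have Lx : L *m x = 0 by rewrite -mulmxA rx mulmx0.
have Ltx : L *m (t j *m x) = d *: e0 by rewrite -mulmxA rtx mul_mx_scalar.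
pose y' := upd5 y j (e0 *m v).
have nz' : kron5 y' *m w != 0.
  apply: contraNneq nz => y'0.
  have -> : kron5 y = on_qubit j (x *m e0^T) *m kron5 y'.
    rewrite on_qubit_upd5 -mulmxA (mulmxA e0^T) trmx_delta mul_delta_mx.
    rewrite [delta_mx 0 0 : 'M_1]mx11_scalar mxE /= mul1mx -yx.
    by apply: eq_kron5 => l; rewrite /upd5; case: eqP => [->|].
  by rewrite -mulmxA y'0 mulmx0.
have := congr1 (mulmx (kron5 (upd5 t j L))) fixed.
rewrite !mulmxA !kron5_mul.
have -> : kron5 (fun l => upd5 t j L l *m t l *m y l) = d *: kron5 y'.
  rewrite -kron5_upd5Z; apply: eq_kron5 => l; rewrite /upd5.
  by case: eqP => [->|_]; [rewrite yx mulmxA -(mulmxA L) Ltx scalemxAl | rewrite t_invol mul1mx].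
have -> : kron5 (fun l => upd5 t j L l *m y l) =
          kron5 (upd5 (fun l => t l *m y l) j (0 *: 1%:M)).
  apply: eq_kron5 => l; rewrite /upd5; case: eqP => [->|_] //.
  by rewrite yx mulmxA Lx mul0mx scale0r.
rewrite kron5_upd5Z scale0r !mul0mx -scalemxAl => /eqP.
by rewrite scalemx_eq0 (negbTE nz') orbF => /eqP.
Qed.

Section StabilizerTransfer.
Variables (psi : 'cV[C]_N5) (g t r : 'I_5 -> M2) (c : C) (j : 'I_5).
Hypotheses (psi_unit : dotc psi psi = 1) (g_unit : forall l, g l \in unitmx)
  (g_sym : kron5 g *m psi = c *: psi).
Hypotheses (t_invol : forall l, t l *m t l = 1%:M) (t_stab : kron5 t *m psi = psi)
  (t_r_disjoint : forall l, t l = 1%:M \/ r l = 1%:M)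
  (transfer : on_qubit j (t j) *m psi = kron5 r *m psi)
  (unbiased : (adjm psi *m on_qubit j (t j) *m psi) 0 0 = 0).

(* G (1 + s Q) psi = c (1 + s G R G^-1) psi, and G R G^-1 commutes with T because R and T
   have disjoint supports; so T fixes G (1 + s Q) psi, whose factor at j has rank one. *)
Lemma stabilizer_transfer_eigenline (u : 'cV[C]_2) (v : 'rV[C]_2) s :
  1%:M + s *: t j = u *m v -> collinear2 (g j *m u) (t j *m (g j *m u)).
Proof.
move=> uv; pose y := upd5 g j (g j *m (1%:M + s *: t j)).
pose G := kron5 g; pose Gi := kron5 (fun l => invmx (g l)).
pose R' := kron5 (fun l => g l *m r l *m invmx (g l)).
have GiG : Gi *m G = 1%:M by apply: kron5_unit.
have Py : kron5 y = G *m (1%:M + s *: on_qubit j (t j)).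
  rewrite -(on_qubit1 C j) -on_qubitZ -on_qubitD /on_qubit kron5_mul.
  by apply: eq_kron5 => l; rewrite /y /upd5; case: eqP => [->|_]; rewrite ?mulmx1.
have GR : G *m kron5 r = R' *m G.
  by rewrite !kron5_mul; apply: eq_kron5 => l; rewrite -mulmxA mulVmx ?mulmx1.
have TR' : kron5 t *m R' = R' *m kron5 t.
  rewrite !kron5_mul; apply: eq_kron5 => l.
  by case: (t_r_disjoint l) => ->; rewrite ?mul1mx ?mulmx1 // mulmxV ?mul1mx ?mulmx1.
have Ppsi : (1%:M + s *: on_qubit j (t j)) *m psi = (1%:M + s *: kron5 r) *m psi.
  by rewrite !mulmxDl -!scalemxAl transfer.
have G1R : G *m (1%:M + s *: kron5 r) = (1%:M + s *: R') *m G.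
  by rewrite mulmxDr mulmxDl mulmx1 mul1mx -scalemxAr -scalemxAl GR.
have yG : kron5 y *m psi = c *: ((1%:M + s *: R') *m psi).
  by rewrite Py -mulmxA Ppsi mulmxA G1R -mulmxA g_sym -scalemxAr.
apply: (kron5_fixed_rank1 (y := y) (w := psi) (v := v)) => //.
- have TR1 : kron5 t *m (1%:M + s *: R') = (1%:M + s *: R') *m kron5 t.
    by rewrite mulmxDr mulmxDl mulmx1 mul1mx -scalemxAr -scalemxAl TR'.
  by rewrite yG -scalemxAr mulmxA TR1 -mulmxA t_stab.
- apply/eqP => y0.
  have : dotc psi ((1%:M + s *: on_qubit j (t j)) *m psi) = 1.
    by rewrite mulmxDl mul1mx -scalemxAl dotcD dotcZ psi_unit /dotc mulmxA unbiased mulr0 addr0.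
  have P0 : (1%:M + s *: on_qubit j (t j)) *m psi = 0.
    by rewrite -[LHS]mul1mx -{1}GiG -mulmxA (mulmxA G) -Py y0 mulmx0.
  by rewrite P0 /dotc mulmx0 mxE => /eqP; rewrite eq_sym oner_eq0.
- by rewrite /y /upd5 eqxx uv mulmxA.
Qed.

End StabilizerTransfer.

Lemma kron5_symmetry_parity (psi : 'cV[C]_N5) (g t : 'I_5 -> M2) (c : C) (e : 'I_5 -> C) :
  psi != 0 -> (forall l, g l \in unitmx) -> kron5 g *m psi = c *: psi ->
  kron5 t *m psi = psi -> (forall l, g l *m t l = e l *: (t l *m g l)) ->
  \prod_(l < 5) e l = 1.
Proof.
move=> psi0 g_unit g_sym t_stab comm.
have c0 : c != 0.
  apply: contraNneq psi0 => c0.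
  by rewrite -[psi]mul1mx -(kron5_unit g_unit) -mulmxA g_sym c0 scale0r mulmx0.
have gt : kron5 g *m kron5 t = (\prod_(l < 5) e l) *: (kron5 t *m kron5 g).
  by rewrite !kron5_mul -kron5Z; apply: eq_kron5.
have := congr1 (mulmx (kron5 g)) t_stab.
rewrite mulmxA gt -scalemxAl -mulmxA g_sym -scalemxAr t_stab scalerA => /eqP.
rewrite -subr_eq0 -scalerBl scalemx_eq0 (negbTE psi0) orbF subr_eq0.
by rewrite -{2}[c]mul1r (inj_eq (mulIf c0)) => /eqP.
Qed.

End LocalSymmetry.

Section ScaledPauli.
Variable C : numClosedFieldType.
Local Notation M2 := 'M[C]_2.
Local Notation X := (PauliX : M2).
Local Notation Z := (PauliZ : M2).

Definition col2 (a b : C) : 'cV[C]_2 := \col_i (if i == 0 then a else b).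
Definition row2 (a b : C) : 'rV[C]_2 := \row_i (if i == 0 then a else b).

Lemma col2_row2 (a b c d : C) : col2 a b *m row2 c d = m22 (a * c) (a * d) (b * c) (b * d).
Proof. by apply: matrix2P; rewrite !mxE big_ord1 !mxE. Qed.

Lemma m22_col2 (p q r s a b : C) :
  m22 p q r s *m col2 a b = col2 (p * a + q * b) (r * a + s * b).
Proof. by apply/matrixP => i k; rewrite [k]ord1 !mxE big_ord2 !mxE; case: (ord2P i) => ->. Qed.

Lemma collinear2_col2 (a b c d : C) : collinear2 (col2 a b) (col2 c d) <-> a * d = b * c.
Proof. by rewrite /collinear2 !mxE. Qed.

Definition scaled_pauli (g : M2) : Prop :=
  exists2 k : C, k != 0 & [\/ g = k *: 1%:M, g = k *: X, g = k *: Z | g = k *: (X *m Z)].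

Lemma scaled_pauli_of_eigenlines (g : M2) : g \in unitmx ->
  collinear2 (g *m col2 1 0) (Z *m (g *m col2 1 0)) ->
  collinear2 (g *m col2 0 1) (Z *m (g *m col2 0 1)) ->
  collinear2 (g *m col2 1 1) (X *m (g *m col2 1 1)) -> scaled_pauli g.
Proof.
rewrite [g]m22_eta; move: (g 0 0) (g 0 1) (g 1 0) (g 1 1) => p q r s.
rewrite unitmxE det_m22 unitfE PauliX_m22 PauliZ_m22 !m22_col2 !collinear2_col2.
have two0 : (2 : C) != 0 by rewrite pnatr_eq0.
move=> det0 /eqP e0 /eqP e1 /eqP f.
rewrite -subr_eq0 in e0; rewrite -subr_eq0 in e1; rewrite -subr_eq0 in f.
have /eqP : 2 * (p * r) = 0 by rewrite -oppr0 -(eqP e0); ring.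
rewrite mulf_eq0 (negbTE two0) mulf_eq0 /= => pr.
have /eqP : 2 * (q * s) = 0 by rewrite -oppr0 -(eqP e1); ring.
rewrite mulf_eq0 (negbTE two0) mulf_eq0 /= => qs.
have /eqP : (p + q) ^+ 2 - (r + s) ^+ 2 = 0 by rewrite -(eqP f); ring.
rewrite subr_eq0 eqf_sqr => sq.
case/orP: pr => /eqP z.
- move: det0 qs sq; rewrite z mul0r sub0r oppr_eq0 mulf_eq0 negb_or => /andP [q0 r0].
  rewrite (negbTE q0) /= => /eqP ->; rewrite add0r addr0.
  by case/orP => /eqP ->; exists r => //; [constructor 2 | constructor 4]; m22_ring.
- move: det0 qs sq; rewrite z mulr0 subr0 mulf_eq0 negb_or => /andP [p0 s0].
  rewrite (negbTE s0) orbF => /eqP ->; rewrite addr0 add0r.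
  case/orP => /eqP ->;
    [exists s => //; constructor 1 | exists (- s); rewrite ?oppr_eq0 //; constructor 3];
    by m22_ring.
Qed.

Lemma scaled_pauli_gram g : scaled_pauli g -> exists2 lam : C, 0 < lam & adjm g *m g = lam%:M.
Proof.
case=> k k0 g_k; exists (k * k^* ); first by rewrite mul_conjC_gt0.
by case: g_k => ->; m22_ring.
Qed.

Lemma scaled_pauli_comm g sigma : scaled_pauli g -> sigma = X \/ sigma = Z ->
  exists e : C, g *m sigma = e *: (sigma *m g).
Proof.
by case=> k _ g_k [] ->; case: g_k => ->; first [exists 1; m22_ring | exists (-1); m22_ring].
Qed.

Lemma mxtrace_gram_weighted (b : C) (g sigma : M2) (lam e : C) :
  adjm g *m g = lam%:M -> g *m sigma = e *: (sigma *m g) ->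
  sigma *m sigma = 1%:M -> \tr sigma = 0 ->
  \tr (adjm g *m ((2^-1)%:M + b *: sigma) *m g *m sigma) = e * (2 * b * lam).
Proof.
move=> gram comm invol tr0.
have sgs : sigma *m g *m sigma = e *: g by rewrite -mulmxA comm -scalemxAr mulmxA invol mul1mx.
rewrite mulmxDr !mulmxDl mul_mx_scalar -!scalemxAl gram mul_scalar_mx -scalemxAr -!mulmxA.
rewrite -scalemxAl -mulmxA (mulmxA sigma) sgs -scalemxAr gram mxtraceD !mxtraceZ tr0.
by rewrite mxtrace_scalar; ring.
Qed.

Lemma mxtrace_gram_half (g : M2) (lam : C) :
  adjm g *m g = lam%:M -> \tr (adjm g *m (2^-1)%:M *m g) = lam.
Proof. by move=> gram; rewrite mul_mx_scalar -scalemxAl gram mxtraceZ mxtrace_scalar; field. Qed.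

Lemma half_plus_pauli_unit (sigma : M2) (b : C) :
  sigma = X \/ sigma = Z -> 0 <= b -> b < 2^-1 -> (2^-1)%:M + b *: sigma \in unitmx.
Proof.
move=> sigmaXZ b0 b1; rewrite unitmxE unitfE.
have -> : \det ((2^-1)%:M + b *: sigma) = (2^-1 + b) * (2^-1 - b).
  by case: sigmaXZ => ->; m22_normalize; rewrite det_m22; ring.
by rewrite mulf_neq0 // gt_eqF // ?subr_gt0 // ltr_wpDr // invr_gt0 ltr0n.
Qed.

End ScaledPauli.

Section RingStateSymmetries.
Variable C : numClosedFieldType.
Local Notation M2 := 'M[C]_2.
Local Notation X := (PauliX : M2).
Local Notation Z := (PauliZ : M2).
Variables (psi : 'cV[C]_N5) (g : 'I_5 -> M2) (c : C).
Hypotheses (psi_unit : dotc psi psi = 1) (psi_stab : forall k, ring_stab k *m psi = psi).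
Hypotheses (g_unit : forall l, g l \in unitmx) (g_sym : kron5 g *m psi = c *: psi).

Lemma ring_symmetry_Z_eigenline l (u : 'cV[C]_2) v s :
  1%:M + s *: Z = u *m v -> collinear2 (g l *m u) (Z *m (g l *m u)).
Proof.
rewrite -(stab_string_pred C l).
apply: (stabilizer_transfer_eigenline psi_unit g_unit g_sym
          (t := stab_string (l + 1)) (r := z_transfer l)).
- exact: stab_string_invol.
- by rewrite -ring_stabE.
- exact: ring_Z_disjoint.
- by rewrite stab_string_pred -ring_Z_transfer -mulmxA psi_stab.
- rewrite stab_string_pred; apply: (expect_anticomm (S := ring_stab l)) => //.
  + exact: ring_stab_herm.
  + exact: ring_Z_anticomm.
Qed.

Lemma ring_symmetry_X_eigenline l (u : 'cV[C]_2) v s :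
  1%:M + s *: X = u *m v -> collinear2 (g l *m u) (X *m (g l *m u)).
Proof.
rewrite -(stab_string_self C l).
apply: (stabilizer_transfer_eigenline psi_unit g_unit g_sym
          (t := stab_string l) (r := x_transfer l)).
- exact: stab_string_invol.
- by rewrite -ring_stabE.
- exact: ring_X_disjoint.
- by rewrite stab_string_self -ring_X_transfer !ring_stabE -!mulmxA -!ring_stabE !psi_stab.
- rewrite stab_string_self; apply: (expect_anticomm (S := ring_stab (l + 1))) => //.
  + exact: ring_stab_herm.
  + exact: ring_X_anticomm.
Qed.

Lemma ring_symmetry_scaled_pauli l : scaled_pauli (g l).
Proof.
apply: scaled_pauli_of_eigenlines => //.
- by apply: (@ring_symmetry_Z_eigenline l _ (row2 2 0) 1); rewrite col2_row2; m22_ring.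
- by apply: (@ring_symmetry_Z_eigenline l _ (row2 0 2) (-1)); rewrite col2_row2; m22_ring.
- by apply: (@ring_symmetry_X_eigenline l _ (row2 1 1) 1); rewrite col2_row2; m22_ring.
Qed.

End RingStateSymmetries.

Section KrausMaps.
Variable C : numClosedFieldType.
Local Notation M2 := 'M[C]_2.

Lemma kraus_trace_preserving n (K : 'I_n -> 'I_5 -> M2) (rho : 'M[C]_N5) :
  kraus_TP K -> \tr (kraus_apply K rho) = \tr rho.
Proof.
move=> TP; rewrite /kraus_apply raddf_sum /=.
under eq_bigr do rewrite mxtrace_mulC mulmxA.
by rewrite -raddf_sum /= -mulmx_suml TP mul1mx.
Qed.

Lemma kraus_image_normalized n (K : 'I_n -> 'I_5 -> M2) (psi v : 'cV[C]_N5) (c : C) :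
  kraus_TP K -> dotc psi psi = 1 -> v != 0 ->
  kraus_apply K (proj psi) = c *: proj v ->
  kraus_apply K (proj psi) = proj ((vnorm v)^-1 *: v).
Proof.
move=> TP psi_unit v0 image.
have c_v : c * dotc v v = 1.
  by move: (kraus_trace_preserving (proj psi) TP); rewrite image mxtraceZ !mxtrace_proj psi_unit.
have vv0 : dotc v v != 0 by rewrite dotc_eq0.
by rewrite image proj_normalize -[c](mulfK vv0) c_v mul1r.
Qed.

Lemma kraus_pure_image n (K : 'I_n -> 'I_5 -> M2) (psi beta : 'cV[C]_N5) :
  kraus_apply K (proj psi) = proj beta -> dotc beta beta = 1 ->
  forall i, kron5 (K i) *m psi = dotc beta (kron5 (K i) *m psi) *: beta.
Proof.
move=> image beta_unit; apply: (sum_proj_eq_proj (w := fun i => kron5 (K i) *m psi)) beta_unit.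
by rewrite -image; apply: eq_bigr => i _; rewrite proj_mul.
Qed.

End KrausMaps.

Section Twirl.
Variable C : numClosedFieldType.
Local Notation M2 := 'M[C]_2.
Local Notation X := (PauliX : M2).
Local Notation Z := (PauliZ : M2).

Definition affine3 (x y z : C) : 'M[C]_N5 :=
  (1%:M + x *: on_qubit 0 Z) *m (1%:M + y *: on_qubit 1 X) *m (1%:M + z *: on_qubit 2 Z).

Lemma affine3_kron5 x y z :
  affine3 x y z = kron5 (string5 (1%:M + x *: Z) (1%:M + y *: X) (1%:M + z *: Z) 1%:M 1%:M).
Proof.
have E j s (sigma : M2) : 1%:M + s *: on_qubit j sigma = on_qubit j (1%:M + s *: sigma).
  by rewrite on_qubitD on_qubitZ on_qubit1.
rewrite /affine3 !E /on_qubit !kron5_mul; apply: eq_kron5 => l.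
by ord5_cases l; rewrite /= ?mul1mx ?mulmx1.
Qed.

Lemma affine3_even_sum x y z :
  affine3 x y z + affine3 (- x) (- y) z + affine3 x (- y) (- z) + affine3 (- x) y (- z) =
  4 *: (1%:M + (x * y * z) *: ring_stab 1).
Proof.
have -> : ring_stab 1 = on_qubit 0 Z *m on_qubit 1 X *m on_qubit 2 Z :> 'M[C]_N5.
  by rewrite /ring_stab; congr (on_qubit _ _ *m _ *m on_qubit _ _); apply: val_inj.
rewrite /affine3; move: (on_qubit 0 Z) (on_qubit 1 X) (on_qubit 2 Z) => A B D.
rewrite !mulmxDl !mulmxDr !mul1mx !mulmx1 !mulmxDl !mul1mx.
rewrite -!scalemxAl -!scalemxAr -!scalemxAl !scalerA.
by apply/matrixP => i j; rewrite !mxE; ring.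
Qed.

(* The stabilizer elements 1, A_0, A_2 and A_0 A_2 as product strings. *)
Definition twirl_string (k : 'I_4) : 'I_5 -> M2 :=
  match val k with
  | 0 => string5 1%:M 1%:M 1%:M 1%:M 1%:M
  | 1 => string5 X Z 1%:M 1%:M Z
  | 2 => string5 1%:M Z X Z 1%:M
  | _ => string5 X 1%:M X Z Z
  end.

Lemma twirl_string_herm k l : adjm (twirl_string k l) = twirl_string k l.
Proof.
by case: k => [[|[|[|[|//]]]] ?]; ord5_cases l; rewrite /twirl_string /string5 /=; m22_ring.
Qed.

Lemma kron5_conj_affine3 (S : 'I_5 -> M2) x y z x' y' z' :
  (forall l, S l *m string5 (1%:M + x *: Z) (1%:M + y *: X) (1%:M + z *: Z) 1%:M 1%:M l *m S l =
             string5 (1%:M + x' *: Z) (1%:M + y' *: X) (1%:M + z' *: Z) 1%:M 1%:M l) ->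
  kron5 S *m affine3 x y z *m kron5 S = affine3 x' y' z'.
Proof. by move=> conj; rewrite !affine3_kron5 !kron5_mul; apply: eq_kron5. Qed.

Lemma twirl_affine3 x y z :
  \sum_(k < 4) kron5 (twirl_string k) *m affine3 x y z *m kron5 (twirl_string k) =
  4 *: (1%:M + (x * y * z) *: ring_stab 1).
Proof.
rewrite -affine3_even_sum !big_ord_recl big_ord0 addr0 !addrA.
rewrite (kron5_conj_affine3 (x' := x) (y' := y) (z' := z)).
rewrite (kron5_conj_affine3 (x' := - x) (y' := - y) (z' := z)).
rewrite (kron5_conj_affine3 (x' := x) (y' := - y) (z' := - z)).
rewrite (kron5_conj_affine3 (x' := - x) (y' := y) (z' := - z)) //.
all: by move=> l; ord5_cases l; rewrite /twirl_string /string5 /=; m22_ring.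
Qed.

Lemma gram_twirled (b : C) (F : 'I_5 -> M2) k :
  let K := scale5 b (fun l => F l *m twirl_string k l) in
  adjm (kron5 K) *m kron5 K =
  (b^* * b) *: (kron5 (twirl_string k) *m (adjm (kron5 F) *m kron5 F) *m kron5 (twirl_string k)).
Proof.
rewrite /= kron5_scale5 adjmZ -scalemxAl -scalemxAr scalerA -kron5_mul adjm_mul.
rewrite (adjm_kron5 (twirl_string k)); under eq_kron5 do rewrite twirl_string_herm.
by rewrite !mulmxA.
Qed.

Lemma twirled_gram_sum (b c x : C) (F : 'I_5 -> M2) :
  adjm (kron5 F) *m kron5 F = c *: affine3 x x x ->
  \sum_(k < 4) adjm (kron5 (scale5 b (fun l => F l *m twirl_string k l))) *m
                kron5 (scale5 b (fun l => F l *m twirl_string k l)) =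
  (4 * (b^* * b * c)) *: (1%:M + x ^+ 3 *: ring_stab 1).
Proof.
move=> gramF; under eq_bigr do rewrite gram_twirled gramF -scalemxAr -scalemxAl scalerA.
by rewrite -scaler_sumr twirl_affine3 scalerA; congr (_ *: (_ + _ *: _)); ring.
Qed.

Definition odd_proj : 'I_5 -> M2 :=
  string5 (2^-1 *: (1%:M - Z)) (2^-1 *: (1%:M - X)) (2^-1 *: (1%:M - Z)) 1%:M 1%:M.

Lemma odd_proj_gram :
  adjm (kron5 odd_proj) *m kron5 odd_proj = (2^-1) ^+ 3 *: affine3 (-1) (-1) (-1).
Proof.
rewrite adjm_kron5 kron5_mul affine3_kron5.
have -> : (2^-1 : C) ^+ 3 = \prod_(l < 5) (if (l < 3)%N then 2^-1 else 1).
  by rewrite big_ord5 /= !mulr1 !exprS expr0 mulr1.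
rewrite -kron5Z; apply: eq_kron5 => l.
by ord5_cases l; rewrite /odd_proj /string5 /=; m22_field.
Qed.

Lemma odd_proj_ring_stab : kron5 odd_proj *m ring_stab 1 = - kron5 odd_proj.
Proof.
rewrite ring_stabE kron5_mul -scaleN1r.
have -> : (-1 : C) = \prod_(l < 5) (if (l < 3)%N then -1 else 1).
  by rewrite big_ord5 /= !mulr1 mulrN1 opprK mulr1.
rewrite -kron5Z; apply: eq_kron5 => l.
by ord5_cases l; rewrite /odd_proj /stab_string /string5 /=; m22_field.
Qed.

End Twirl.

Arguments twirl_string {C} k l.
Arguments odd_proj {C}.

Section FilteredRingState.
Variable C : numClosedFieldType.
Local Notation M2 := 'M[C]_2.
Local Notation X := (PauliX : M2).
Local Notation Z := (PauliZ : M2).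
Variables (psi : 'cV[C]_N5) (a : C) (h : 'I_5 -> M2).
Hypotheses (psi_unit : dotc psi psi = 1) (psi_stab : forall k, ring_stab k *m psi = psi).
Hypotheses (a_gt0 : 0 < a) (a_lt : a < 2^-1) (h_herm : forall l, adjm (h l) = h l).
Hypotheses (h0 : h 0 *m h 0 = (2^-1)%:M + a *: Z) (h1 : h 1 *m h 1 = (2^-1)%:M + a *: X)
  (h2 : h 2 *m h 2 = (2^-1)%:M + a *: Z) (h3 : h 3 *m h 3 = (2^-1)%:M)
  (h4 : h 4 *m h 4 = (2^-1)%:M).

Lemma ring_state_neq0 : psi != 0.
Proof. by apply: contra_eq_neq psi_unit => ->; rewrite /dotc mulmx0 mxE eq_sym oner_eq0. Qed.

Lemma filter_unit l : h l \in unitmx.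
Proof.
suff : h l *m h l \in unitmx by rewrite unitmx_mul => /andP [].
have half_unit : (2^-1)%:M \in @unitmx C 2.
  by rewrite -[_%:M]addr0 -(scale0r X) half_plus_pauli_unit ?invr_gt0 ?ltr0n //; left.
ord5_cases l; rewrite ?h0 ?h1 ?h2 ?h3 ?h4 //;
  apply: half_plus_pauli_unit (ltW a_gt0) a_lt; by [left | right].
Qed.

Lemma filtered_state_neq0 : kron5 h *m psi != 0.
Proof.
apply: contra_neq ring_state_neq0 => hpsi0.
by rewrite -[psi]mul1mx -(kron5_unit filter_unit) -mulmxA hpsi0 mulmx0.
Qed.

Lemma ring_kraus_slot_trace (g : M2) l : scaled_pauli g ->
  exists2 p : C * C, g *m stab_string 1 l = p.1 *: (stab_string 1 l *m g) &
    0 < p.2 /\ \tr (adjm (h l *m g) *m (h l *m g) *m stab_string 1 l) = p.1 * p.2.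
Proof.
move=> sp; have [lam lam0 gram] := scaled_pauli_gram sp.
rewrite adjm_mul h_herm !mulmxA -(mulmxA (adjm g) (h l)).
have pauli_slot sigma : sigma = X \/ sigma = Z -> exists2 p : C * C,
    g *m sigma = p.1 *: (sigma *m g) &
    0 < p.2 /\ \tr (adjm g *m ((2^-1)%:M + a *: sigma) *m g *m sigma) = p.1 * p.2.
  move=> sigmaXZ; have [e comm] := scaled_pauli_comm sp sigmaXZ.
  exists (e, 2 * a * lam) => //; split; first by rewrite !mulr_gt0 ?ltr0n.
  rewrite /=; apply: (mxtrace_gram_weighted a gram comm);
    by case: sigmaXZ => ->; rewrite ?PauliX2 ?PauliZ2 ?mxtrace_PauliX ?mxtrace_PauliZ.
have half_slot : exists2 p : C * C, g *m 1%:M = p.1 *: (1%:M *m g) &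
    0 < p.2 /\ \tr (adjm g *m (2^-1)%:M *m g *m 1%:M) = p.1 * p.2.
  by exists (1, lam); rewrite /= ?mulmx1 ?mul1mx ?scale1r ?mul1r ?(mxtrace_gram_half gram).
ord5_cases l; rewrite /stab_string /= ?h0 ?h1 ?h2 ?h3 ?h4 //;
  apply: pauli_slot; by [left | right].
Qed.

Lemma ring_kraus_trace_pos (g : 'I_5 -> M2) c :
  (forall l, g l \in unitmx) -> kron5 g *m psi = c *: psi ->
  0 < \tr (adjm (kron5 (fun l => h l *m g l)) *m kron5 (fun l => h l *m g l) *m ring_stab 1).
Proof.
move=> g_unit g_sym.
have [p comm tr_p] := fin_all_exists2 (fun l =>
  ring_kraus_slot_trace l (ring_symmetry_scaled_pauli psi_unit psi_stab g_unit g_sym l)).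
rewrite ring_stabE adjm_kron5 !kron5_mul mxtrace_kron5.
under eq_bigr => l _ do rewrite (proj2 (tr_p l)).
rewrite big_split /= (kron5_symmetry_parity ring_state_neq0 g_unit g_sym _ comm) ?mul1r.
  by apply: prodr_gt0 => l _; case: (tr_p l).
by rewrite -ring_stabE psi_stab.
Qed.

Theorem ring_state_not_SEP1 (beta : 'cV[C]_N5) (mu : C) :
  dotc beta beta = 1 -> beta = mu *: (kron5 h *m psi) -> ~ SEP1_transforms psi beta.
Proof.
move=> beta_unit beta_def [m [K [K_unit [TP image]]]].
have pos i : 0 < \tr (adjm (kron5 (K i)) *m kron5 (K i) *m ring_stab 1).
  pose g l := invmx (h l) *m K i l.
  have g_unit l : g l \in unitmx by rewrite unitmx_mul unitmx_inv filter_unit K_unit.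
  have Ki := kraus_pure_image image beta_unit i; set c := dotc beta _ in Ki.
  have g_sym : kron5 g *m psi = (c * mu) *: psi.
    have -> : kron5 g = kron5 (fun l => invmx (h l)) *m kron5 (K i) by rewrite kron5_mul.
    rewrite -mulmxA Ki beta_def scalerA -scalemxAr mulmxA kron5_unit ?mul1mx //.
    exact: filter_unit.
  have -> : kron5 (K i) = kron5 (fun l => h l *m g l).
    by apply: eq_kron5 => l; rewrite mulKVmx ?filter_unit.
  exact: ring_kraus_trace_pos g_unit g_sym.
have sum0 : \sum_i \tr (adjm (kron5 (K i)) *m kron5 (K i) *m ring_stab 1) = 0.
  rewrite -raddf_sum -mulmx_suml TP mul1mx /= ring_stabE mxtrace_kron5 big_ord5.
  by rewrite /stab_string /= mxtrace_PauliZ mul0r.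
case: m K {K_unit image} TP pos sum0 => [|m] K TP pos sum0.
  by move/matrixP/(_ 0 0): TP; rewrite big_ord0 !mxE /= => /eqP; rewrite eq_sym oner_eq0.
by move: (pos ord0); rewrite (psumr_eq0P (fun i _ => ltW (pos i)) sum0 (i := ord0)) // ltxx.
Qed.

Lemma filter_gram : adjm (kron5 h) *m kron5 h = (2^-1) ^+ 5 *: affine3 (2 * a) (2 * a) (2 * a).
Proof.
rewrite adjm_kron5 kron5_mul affine3_kron5.
have -> : (2^-1 : C) ^+ 5 = \prod_(l < 5) 2^-1 by rewrite big_ord5 /= !exprS expr0 mulr1.
rewrite -kron5Z; apply: eq_kron5 => l; rewrite h_herm.
by ord5_cases l; rewrite /string5 /= ?h0 ?h1 ?h2 ?h3 ?h4; m22_field.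
Qed.

Lemma twirl_string_stab k : kron5 (twirl_string k) *m psi = psi.
Proof.
case: k => [[|[|[|[|//]]]] ?].
- by rewrite [kron5 _](kron5_const1 C) mul1mx.
- by rewrite -[in RHS](psi_stab 0); congr (_ *m _); rewrite /twirl_string /string5; ring5_eq.
- by rewrite -[in RHS](psi_stab 2); congr (_ *m _); rewrite /twirl_string /string5; ring5_eq.
- rewrite -[in RHS](psi_stab 2) -[in RHS](psi_stab 0) mulmxA; congr (_ *m _).
  by rewrite /twirl_string /string5; ring5_eq.
Qed.

Lemma odd_proj_annihilates : kron5 odd_proj *m psi = 0.
Proof.
have : kron5 odd_proj *m psi = - (kron5 odd_proj *m psi).
  by rewrite -{1}(psi_stab 1) mulmxA odd_proj_ring_stab mulNmx.
by move/eqP; rewrite -addr_eq0 -mulr2n -scaler_nat scalemx_eq0 pnatr_eq0 => /eqP.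
Qed.

Definition sep_kraus (b g : C) (k : 'I_(4 + 4)) : 'I_5 -> M2 :=
  match split k with
  | inl i => scale5 b (fun l => h l *m twirl_string i l)
  | inr i => scale5 g (fun l => odd_proj l *m twirl_string i l)
  end.

(* The two halves of the family contribute |b|^2 (1 + 8 a^3 A_1) / 8 and
   |g|^2 (1 - A_1) / 2 to the sum of the K^* K. *)
Lemma sep_kraus_TP (b g : C) :
  b^* * b = 8 / (1 + 8 * a ^+ 3) -> g^* * g = 16 * a ^+ 3 / (1 + 8 * a ^+ 3) ->
  kraus_TP (sep_kraus b g).
Proof.
move=> bb gg.
have a3 : 1 + 8 * a ^+ 3 != 0 by rewrite gt_eqF // ltr_pwDl // mulr_ge0 // exprn_ge0 // ltW.
rewrite /kraus_TP big_split_ord /= /sep_kraus.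
under eq_bigr do rewrite (unsplitK (inl _ _)).
under [X in _ + X]eq_bigr do rewrite (unsplitK (inr _ _)).
rewrite (twirled_gram_sum _ filter_gram) (twirled_gram_sum _ (odd_proj_gram C)).
by apply/matrixP => i j; rewrite !mxE bb gg; field.
Qed.

Lemma sep_kraus_image (b g : C) :
  kraus_apply (sep_kraus b g) (proj psi) = (4 * (b * b^*)) *: proj (kron5 h *m psi).
Proof.
have stab i : kron5 (scale5 b (fun l => h l *m twirl_string i l)) *m psi = b *: (kron5 h *m psi).
  by rewrite kron5_scale5 -kron5_mul -scalemxAl -mulmxA twirl_string_stab.
have odd i : kron5 (scale5 g (fun l => odd_proj l *m twirl_string i l)) *m psi = 0.
  rewrite kron5_scale5 -kron5_mul -scalemxAl -mulmxA twirl_string_stab.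
  by rewrite odd_proj_annihilates scaler0.
rewrite /kraus_apply big_split_ord /= /sep_kraus.
under eq_bigr do rewrite (unsplitK (inl _ _)) proj_mul stab projZ.
under [X in _ + X]eq_bigr do rewrite (unsplitK (inr _ _)) proj_mul odd /proj mul0mx.
by rewrite big1_eq addr0 sumr_const card_ord scalerMnl -mulr_natl.
Qed.

Theorem ring_state_SEP :
  SEP_transforms psi ((vnorm (kron5 h *m psi))^-1 *: (kron5 h *m psi)).
Proof.
have D0 : 0 < 1 + 8 * a ^+ 3 by rewrite ltr_pwDl // mulr_ge0 // exprn_ge0 // ltW.
pose b := sqrtC (8 / (1 + 8 * a ^+ 3)); pose g := sqrtC (16 * a ^+ 3 / (1 + 8 * a ^+ 3)).
have TP : kraus_TP (sep_kraus b g).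
  by apply: sep_kraus_TP; rewrite mul_conj_sqrtC // divr_ge0 ?mulr_ge0 ?exprn_ge0 ?ltW.
exists (4 + 4)%N, (sep_kraus b g); split => //.
exact: (kraus_image_normalized TP psi_unit filtered_state_neq0 (sep_kraus_image b g)).
Qed.

End FilteredRingState.

Unset Implicit Arguments.
Theorem mainTheorem4 (R : realType) (a : R) (ha : 0 < a < 2^-1)
  (psi : 'cV[R[i]]_N5)
  (psi_unit : (adjm psi *m psi) 0 0 = 1)
  (psi_stab : forall i : 'I_5, ring_stab i *m psi = psi)
  (h : 'I_5 -> 'M[R[i]]_2)
  (h_psd : forall j, psd2 (h j))
  (h0 : h 0 *m h 0 = (2^-1)%:M + (a%:C)%C *: PauliZ)
  (h1 : h 1 *m h 1 = (2^-1)%:M + (a%:C)%C *: PauliX)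
  (h2 : h 2 *m h 2 = (2^-1)%:M + (a%:C)%C *: PauliZ)
  (h3 : h 3 *m h 3 = (2^-1)%:M)
  (h4 : h 4 *m h 4 = (2^-1)%:M) :
  let hpsi := kron5 h *m psi in
  let target := (vnorm hpsi)^-1 *: hpsi in
  SEP_transforms psi target /\ ~ SEP1_transforms psi target.
Proof.
move=> hpsi target; case/andP: ha => a_gt0 a_lt.
have a'_gt0 : 0 < (a%:C)%C :> R[i] by rewrite ltcR.
have a'_lt : (a%:C)%C < 2^-1 :> R[i] by rewrite -(rmorph_nat (real_complex R)) -fmorphV ltcR.
have h_herm l : adjm (h l) = h l by case: (h_psd l).
split; first exact: (ring_state_SEP psi_unit psi_stab a'_gt0 a'_lt h_herm h0 h1 h2 h3 h4).
apply: (ring_state_not_SEP1 psi_unit psi_stab a'_gt0 a'_lt h_herm h0 h1 h2 h3 h4 _ erefl).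
exact: (dotc_normalize (filtered_state_neq0 psi_unit a'_gt0 a'_lt h0 h1 h2 h3 h4)).
Qed.
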